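(* Let $n\ge 1$. Let $\bar\pi=\bar\pi(0,d_1,\dots,d_t)$ and $\bar\pi'=\bar\pi(0,d'_1,\dots,d'_u)$ be normalized pure diagrams with $0\le t,u\le n$, and suppose $\bar\pi<\bar\pi'$ in the partial order. Then $H(\bar\pi',t)-H(\bar\pi,t)$ is a nonzero power series all of whose coefficients are nonnegative; i.e. the Hilbert series is strictly increasing on the partially ordered set of normalized pure diagrams generated in degree zero.
   Context: For integers $d_0<\dots<d_t$, $0\le t\le n$, the pure diagram $\pi(d_0,\dots,d_t)=(\pi_{i,j})_{0\le i\le n,\,j\in\mathbb Z}$ has entry $(-1)^i\prod_{0\le j\le t,\,j\ne i}\frac{1}{d_j-d_i}$ at position $(i,d_i)$, $i=0,\dots,t$, and $0$ elsewhere. When $d_0=0$, the normalized pure diagram is $\bar\pi(0,d_1,\dots,d_t)=d_1d_2\cdots d_t\,\pi(0,d_1,\dots,d_t)$. Partial order: $\pi(d_0,\dots,d_t)\le\pi(d'_0,\dots,d'_u)$ iff $t\ge u$ and $d_i\le d'_i$ for $i=0,\dots,u$ (same for the normalized diagrams). For an array $\beta=(\beta_{i,j})$, its Hilbert series is $H(\beta,t)=\frac{1}{(1-t)^n}\sum_{i=0}^n\sum_j(-1)^i\beta_{i,j}t^j$, expanded as a power series in $t$. *)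

From HB Require Import structures.
From mathcomp Require Import all_boot all_order all_algebra.
Set Implicit Arguments. Unset Strict Implicit. Unset Printing Implicit Defensive.
Import Order.TTheory GRing.Theory Num.Theory.
Local Open Scope ring_scope.

(* An array beta = (beta_{i,j}) with 0 <= i <= n, j in Z, rational entries,
   is represented as a function  nat -> int -> rat  (rows i > n are ignored). *)
Definition array := nat -> int -> rat.

Definition pure_diagram (d : seq int) : array :=
  fun i j =>
    if (i < size d)%N && (j == nth 0 d i) then
      (-1) ^+ i * \prod_(k < size d | (k : nat) != i)
                    ((nth 0 d k - nth 0 d i)%:~R)^-1
    else 0.

Definition norm_pure_diagram (d : seq int) : array :=
  fun i j => (\prod_(k < size d | (0 < (k : nat))%N) (nth 0 d k)%:~R)
             * pure_diagram d i j.

Definition valid_degrees (n : nat) (d : seq int) : bool :=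
  [&& (0 < size d)%N, (size d <= n.+1)%N & sorted <%R d].

Definition pd_le (d d' : seq int) : bool :=
  (size d' <= size d)%N &&
  [forall i : 'I_(size d'), nth 0 d i <= nth 0 d' i].

Definition pd_lt (d d' : seq int) : bool := pd_le d d' && (d != d').

(* Multiplication of a power series (coefficient sequence) by 1/(1-t). *)
Definition psum (f : nat -> rat) : nat -> rat :=
  fun k => \sum_(m < k.+1) f m.

Definition hilb_num (n : nat) (b : array) : nat -> rat :=
  fun j => \sum_(i < n.+1) (-1) ^+ i * b i (Posz j).

(* k-th coefficient of H(beta,t) = hilb_num / (1-t)^n as a power series in t. *)
Definition hilb_coef (n : nat) (b : array) : nat -> rat :=
  iter n psum (hilb_num n b).

(* For d = (0, d_1, ..., d_t), the k-th coefficient of H(pi_bar(d), t) is d_1 ... d_t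
   times a signed divided difference, over the nodes d, of the discrete truncated
   power y |-> [t^k] t^y / (1 - t)^n.  With n + 1 nodes this divided difference is a
   discrete B-spline in k, nonnegative and positive at its first knot by the
   de Boor-Cox recurrence; with fewer nodes it is an iterated partial sum of such a
   B-spline.  By the two-point recurrence for divided differences, deleting a nonzero
   degree, or raising one degree while keeping the others, adds a positive multiple
   of such a B-spline to the normalized Hilbert series.  If pi_bar(d) < pi_bar(d'),
   then d' arises from d by deleting its last degrees and then raising the remaining
   ones, the largest first so that every intermediate sequence stays increasing. *)

From HB Require Import structures.
From mathcomp Require Import all_boot all_order all_algebra.
From mathcomp Require Import ring lra zify.
Set Implicit Arguments. Unset Strict Implicit. Unset Printing Implicit Defensive.
Import Order.TTheory GRing.Theory Num.Theory.
Local Open Scope ring_scope.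

Section DividedDifference.
Context {R : numFieldType}.
Implicit Types (a : seq int) (f g : int -> R).

(* [ddiff a f] is (-1)^(size a - 1) times the divided difference f[a]; with
   this sign it is nonnegative on the truncated powers [mono_coef] below. *)
Definition ddiff_coef a y : R := \prod_(z <- a | z != y) ((z - y)%:~R)^-1.
Definition ddiff a f : R := \sum_(y <- a) ddiff_coef a y * f y.

Lemma intr_sub_neq0 {x y : int} : x != y -> ((x - y)%:~R : R) != 0.
Proof. by rewrite intr_eq0 subr_eq0. Qed.

Lemma ddiff_perm a b f : perm_eq a b -> ddiff a f = ddiff b f.
Proof.
move=> ab; rewrite /ddiff (perm_big b ab); apply: eq_bigr => y _.
by rewrite /ddiff_coef (perm_big b ab).
Qed.

Lemma eq_in_ddiff a f g : {in a, f =1 g} -> ddiff a f = ddiff a g.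
Proof. by move=> fg; rewrite /ddiff !big_seq; apply: eq_bigr => y /fg ->. Qed.

Lemma ddiffZ a c f : ddiff a (fun y => c * f y) = c * ddiff a f.
Proof. by rewrite /ddiff mulr_sumr; apply: eq_bigr => y _; rewrite mulrCA. Qed.

Lemma ddiffB a f g : ddiff a (fun y => f y - g y) = ddiff a f - ddiff a g.
Proof. by rewrite /ddiff -sumrB; apply: eq_bigr => y _; rewrite mulrBr. Qed.

Lemma ddiff_sum a K (F : nat -> int -> R) :
  \sum_(j < K) ddiff a (F j) = ddiff a (fun y => \sum_(j < K) F j y).
Proof. by rewrite /ddiff exchange_big; apply: eq_bigr => y _; rewrite mulr_sumr. Qed.

Lemma ddiff1 p f : ddiff [:: p] f = f p.
Proof. by rewrite /ddiff /ddiff_coef !big_cons !big_nil eqxx mul1r addr0. Qed.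

Lemma ddiff2 p q f : p != q -> ddiff [:: p; q] f = (f p - f q) / (q - p)%:~R.
Proof.
move=> pq; rewrite /ddiff /ddiff_coef !big_cons !big_nil !eqxx eq_sym pq /=.
by rewrite !mulr1 addr0 -[p - q]opprB mulrNz invrN; ring.
Qed.

Lemma ddiff_coef_cons_self p A : ddiff_coef (p :: A) p = ddiff_coef A p.
Proof. by rewrite /ddiff_coef big_cons eqxx. Qed.

Lemma ddiff_coef_cons p A y :
  p != y -> ddiff_coef (p :: A) y = ((p - y)%:~R)^-1 * ddiff_coef A y.
Proof. by move=> py; rewrite /ddiff_coef big_cons py. Qed.

Lemma ddiff_cons2 p q A f : p != q -> p \notin A -> q \notin A ->
  ddiff [:: p, q & A] f = (ddiff (p :: A) f - ddiff (q :: A) f) / (q - p)%:~R.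
Proof.
move=> pq pA qA; have qp : q != p by rewrite eq_sym.
have sumA : \sum_(y <- A) ddiff_coef [:: p, q & A] y * f y =
    (\sum_(y <- A) ddiff_coef (p :: A) y * f y
     - \sum_(y <- A) ddiff_coef (q :: A) y * f y) / (q - p)%:~R.
  rewrite -sumrB mulr_suml !big_seq; apply: eq_bigr => y yA.
  have py : p != y by apply: contraNneq pA => ->.
  have qy : q != y by apply: contraNneq qA => ->.
  have := intr_sub_neq0 py; have := intr_sub_neq0 qy; have := intr_sub_neq0 qp.
  rewrite !ddiff_coef_cons // !rmorphB /=.
  by move: (ddiff_coef A y) => c Hqp Hq Hp; field; rewrite Hqp Hq Hp.
rewrite /ddiff !big_cons sumA !ddiff_coef_cons_self.
rewrite (ddiff_coef_cons _ qp) (ddiff_coef_cons _ pq) ddiff_coef_cons_self.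
have := intr_sub_neq0 qp; rewrite -[p - q]opprB mulrNz invrN.
by move: (_%:~R) => c Hc; field.
Qed.

Lemma ddiff_cons_mulX p A f : p \notin A ->
  ddiff (p :: A) (fun y => (y%:~R - p%:~R) * f y) = - ddiff A f.
Proof.
move=> pA; rewrite /ddiff big_cons subrr mul0r mulr0 add0r -sumrN !big_seq.
apply: eq_bigr => y yA; have py : p != y by apply: contraNneq pA => ->.
have := intr_sub_neq0 py; rewrite ddiff_coef_cons // rmorphB /=.
by move: (ddiff_coef A y) => c Hp; field.
Qed.

Lemma ddiff_cons_affine p A c f : p \notin A ->
  ddiff (p :: A) (fun y => (c - y%:~R) * f y)
  = (c - p%:~R) * ddiff (p :: A) f + ddiff A f.
Proof.
move=> pA; rewrite (@eq_in_ddiff _ _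
  (fun y => (c - p%:~R) * f y - (y%:~R - p%:~R) * f y)); last by move=> y _; ring.
by rewrite ddiffB ddiffZ ddiff_cons_mulX // opprK.
Qed.

(* The divided-difference form of the de Boor-Cox recurrence. *)
Lemma ddiff_cons_affine_perm p A q B c f :
  p \notin A -> q \notin B -> perm_eq (p :: A) (q :: B) ->
  (q%:~R - p%:~R) * ddiff (p :: A) (fun y => (c - y%:~R) * f y)
  = (c - p%:~R) * ddiff B f + (q%:~R - c) * ddiff A f.
Proof.
move=> pA qB pAqB; have Ep := ddiff_cons_affine c f pA.
have Eq := ddiff_cons_affine c f qB; rewrite -!(ddiff_perm _ pAqB) in Eq.
move: Ep Eq; move: (ddiff (p :: A) _) (ddiff (p :: A) f) => D X Ep Eq.
rewrite (_ : ddiff A f = D - (c - p%:~R) * X); last by rewrite Ep; ring.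
by rewrite (_ : ddiff B f = D - (c - q%:~R) * X); [ring | rewrite Eq; ring].
Qed.

End DividedDifference.

(* [mono_coef m k y] is the coefficient of t^k in t^y / (1 - t)^m. *)
Definition mono_coef (m k : nat) (y : int) : rat :=
  iter m psum (fun j : nat => ((Posz j == y)%:R : rat)) k.

Lemma mono_coef0 k y : mono_coef 0 k y = (k%:Z == y)%:R.
Proof. by []. Qed.

Lemma mono_coefS0 m y : mono_coef m.+1 0 y = mono_coef m 0 y.
Proof. by rewrite /mono_coef /= /psum big_ord1. Qed.

Lemma mono_coefSS m k y :
  mono_coef m.+1 k.+1 y = mono_coef m.+1 k y + mono_coef m k.+1 y.
Proof. by rewrite /mono_coef /= {1}/psum big_ord_recr. Qed.

Lemma mono_coef_binom m k (y : nat) :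
  mono_coef m.+1 k y = if (y <= k)%N then 'C(k - y + m, m)%:R else 0.
Proof.
elim: m k => [|m IHm] k.
  elim: k => [|k IHk]; first by rewrite mono_coefS0 mono_coef0; case: y.
  rewrite mono_coefSS IHk mono_coef0 eqz_nat.
  have [yk|ky] := leqP y k.
    by rewrite (leqW yk) gtn_eqF ?ltnS // !bin0 addr0.
  rewrite add0r; case: eqVneq => [<-|ne]; first by rewrite leqnn bin0.
  by rewrite leq_eqVlt eq_sym (negbTE ne) ltnS leqNgt ky.
elim: k => [|k IHk].
  by rewrite mono_coefS0 IHm; case: (y) => [|y'] //; rewrite !binn.
rewrite mono_coefSS IHk IHm.
case: (ltngtP y k.+1) => [|yk|->]; rewrite ?ltnS.
- by move=> yk; rewrite yk -natrD subSn // !addSn !addnS binS.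
- by rewrite leqNgt (ltnW yk) addr0.
- by rewrite ltnn subnn !add0n !binn add0r.
Qed.

Lemma mono_coef1 k (y : int) : 0 <= y -> mono_coef 1 k y = (y <= k%:Z)%R%:R.
Proof. by case: y => // y _; rewrite mono_coef_binom lez_nat bin0; case: leqP. Qed.

Lemma mono_coef_rec m k (y : nat) :
  m.+1%:R * mono_coef m.+2 k y = (k%:R + m.+1%:R - y%:~R) * mono_coef m.+1 k y.
Proof.
rewrite !mono_coef_binom; case: leqP => yk; last by rewrite !mulr0.
have -> : (k%:R + m.+1%:R - y%:~R : rat) = (k - y + m.+1)%:R.
  by rewrite natrD natrB // -!pmulrn; ring.
by rewrite -!natrM -mul_bin_diag addnS.
Qed.

Lemma mono_coefD r m k y :
  mono_coef (r + m) k y = iter r psum (fun j => mono_coef m j y) k.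
Proof. by rewrite /mono_coef iterD. Qed.

Lemma eq_iter_psum r (f g : nat -> rat) : f =1 g -> iter r psum f =1 iter r psum g.
Proof.
by elim: r => [|r IHr] fg k //=; apply: eq_bigr => j _; rewrite (IHr fg).
Qed.

Lemma iter_psumZ r c (h : nat -> rat) k :
  iter r psum (fun j => c * h j) k = c * iter r psum h k.
Proof.
by elim: r k => [|r IHr] k //=; rewrite /psum mulr_sumr; apply: eq_bigr => j _.
Qed.

Lemma iter_psum_ddiff r a (F : nat -> int -> rat) k :
  iter r psum (fun j => ddiff a (F j)) k
  = ddiff a (fun y => iter r psum (fun j => F j y) k).
Proof.
elim: r k => [|r IHr] k //=; rewrite /psum.
under eq_bigr => j _ do rewrite IHr.
exact: (ddiff_sum a k.+1 (fun j y => iter r psum (F^~ y) j)).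
Qed.

Lemma iter_psum_ge0 r (g : nat -> rat) : (forall j, 0 <= g j) ->
  forall k, 0 <= iter r psum g k.
Proof. by elim: r => [|r IHr] g0 k //=; apply: sumr_ge0 => j _; apply: IHr. Qed.

Lemma iter_psum_ge r (g : nat -> rat) : (forall j, 0 <= g j) ->
  forall k, g k <= iter r psum g k.
Proof.
elim: r => [|r IHr] g0 k //=; rewrite /psum big_ord_recr /=.
rewrite -[g k]add0r; apply: lerD; last exact: IHr.
by apply: sumr_ge0 => j _; apply: iter_psum_ge0.
Qed.

(* For [size a = m.+1], [k |-> ddiff a (mono_coef m k)] is a discrete B-spline with
   knots [a]; these are the properties of it that survive the recurrence. *)
Definition bspline_shape (m : nat) (a : seq int) :=
  [/\ forall k, 0 <= ddiff a (mono_coef m k),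
      forall k : nat, k%:Z < head 0 a -> ddiff a (mono_coef m k) = 0,
      forall k : nat, last 0 a - m%:Z < k%:Z -> ddiff a (mono_coef m k) = 0 &
      forall k : nat, k%:Z = head 0 a -> 0 < ddiff a (mono_coef m k)].

Lemma bspline_shape0 p : 0 <= p -> bspline_shape 0 [:: p].
Proof.
move=> p0; split=> k /=; rewrite ddiff1 /mono_coef /= ?subr0.
- by case: eqP.
- by move=> kp; rewrite lt_eqF.
- by move=> pk; rewrite gt_eqF.
- by move=> ->; rewrite eqxx ltr01.
Qed.

Lemma bspline_shape1 p q : 0 <= p -> p < q -> bspline_shape 1 [:: p; q].
Proof.
move=> p0 pq; have q0 : 0 <= q by rewrite (le_trans p0) ?ltW.
have qp_gt0 : (0 : rat) < (q - p)%:~R by rewrite ltr0z subr_gt0.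
split=> k /=; rewrite ddiff2 ?lt_eqF // !mono_coef1 //.
- apply: divr_ge0; last exact: ltW.
  by case: (leP q k) => qk; rewrite ?(le_trans (ltW pq) qk) ?subrr ?subr0.
- by move=> kp; rewrite !lt_geF ?(lt_trans kp pq) // subrr mul0r.
- move=> qk; have {}qk : q <= k by lia.
  by rewrite qk (le_trans (ltW pq) qk) subrr mul0r.
- by move=> ->; rewrite lexx lt_geF // subr0 mul1r invr_gt0.
Qed.

Lemma ddiff_mono_coef_rec m k p s q :
  sorted <%R (p :: rcons s q) -> all (fun y => 0 <= y) (p :: rcons s q) ->
  (q%:~R - p%:~R) * (m.+1%:R * ddiff (p :: rcons s q) (mono_coef m.+2 k)) =
  (k%:R + m.+1%:R - p%:~R) * ddiff (p :: s) (mono_coef m.+1 k)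
  + (q%:~R - k%:R - m.+1%:R) * ddiff (rcons s q) (mono_coef m.+1 k).
Proof.
move=> srt a_ge0; have /andP[p_notin_R _] := lt_sorted_uniq srt.
have /andP[q_notin_L _] : (q \notin p :: s) && uniq (p :: s).
  by rewrite -rcons_uniq rcons_cons lt_sorted_uniq.
have perm_pq : perm_eq (p :: rcons s q) (q :: p :: s).
  by rewrite -rcons_cons perm_rcons.
rewrite (_ : m.+1%:R * _ = ddiff (p :: rcons s q)
  (fun y => (k%:R + m.+1%:R - y%:~R) * mono_coef m.+1 k y)).
  by rewrite (ddiff_cons_affine_perm _ _ p_notin_R q_notin_L perm_pq); ring.
rewrite -ddiffZ; apply: eq_in_ddiff => y /(allP a_ge0).
by case: y => // y _; rewrite mono_coef_rec.
Qed.

Lemma bspline_shapeS m p s q :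
  sorted <%R (p :: rcons s q) -> all (fun y => 0 <= y) (p :: rcons s q) ->
  bspline_shape m.+1 (p :: s) -> bspline_shape m.+1 (rcons s q) ->
  bspline_shape m.+2 (p :: rcons s q).
Proof.
move=> srt a_ge0 [L_ge0 L_lo L_hi L_pos] [R_ge0 R_lo R_hi R_pos].
have /andP[p_lt_R _] : all (> p) (rcons s q) && pairwise <%R (rcons s q).
  by rewrite -pairwise_cons -lt_sorted_pairwise.
have /andP[L_lt_q _] : all (< q) (p :: s) && pairwise <%R (p :: s).
  by rewrite -pairwise_rcons rcons_cons -lt_sorted_pairwise.
have pq : p < q by apply: (allP p_lt_R); rewrite mem_rcons mem_head.
have p_lt_hR : p < head 0 (rcons s q).
  by apply: (allP p_lt_R); case: (s) => [|x s'] /=; rewrite mem_head.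
have lL_lt_q : last 0 (p :: s) < q by apply: (allP L_lt_q) _ (mem_last p s).
have lR : last 0 (rcons s q) = q by rewrite last_rcons.
have rec (k : nat) := ddiff_mono_coef_rec m k srt a_ge0.
have qp_gt0 : (0 : rat) < q%:~R - p%:~R by rewrite subr_gt0 ltr_int.
have m_gt0 : (0 : rat) < m.+1%:R by [].
have c_gt0 : (0 : rat) < (q%:~R - p%:~R) * m.+1%:R by exact: mulr_gt0.
split=> k /=.
- rewrite -(pmulr_rge0 _ c_gt0) -mulrA rec; apply: addr_ge0.
    have [kp|pk] := ltP (k%:Z) p; first by rewrite L_lo ?mulr0.
    by apply: mulr_ge0 (L_ge0 k); move: pk; rewrite -(ler_int rat); lra.
  have [qk|kq] := ltP (last 0 (rcons s q) - m.+1%:Z) k; first by rewrite R_hi ?mulr0.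
  by apply: mulr_ge0 (R_ge0 k); move: kq; rewrite lR -(ler_int rat) rmorphB /=; lra.
- move=> kp; apply: (mulfI (lt0r_neq0 c_gt0)); rewrite mulr0 -mulrA rec.
  by rewrite L_lo // R_lo ?mulr0 ?addr0 // (lt_trans kp p_lt_hR).
- rewrite last_rcons => qk; apply: (mulfI (lt0r_neq0 c_gt0)).
  rewrite mulr0 -mulrA rec L_hi ?mulr0 ?add0r; last first.
    by move: lL_lt_q qk; move: (last 0 _) => l; lia.
  have [qk'|kq] := ltP (last 0 (rcons s q) - m.+1%:Z) k; first by rewrite R_hi ?mulr0.
  have -> : (q%:~R : rat) - k%:R - m.+1%:R = 0.
    by rewrite (_ : q = k%:Z + m.+1%:Z); [rewrite rmorphD /=; ring | lia].
  by rewrite mul0r.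
- move=> kp; rewrite -(pmulr_rgt0 _ c_gt0) -mulrA rec.
  rewrite R_lo ?mulr0 ?addr0; last by rewrite kp.
  by apply: mulr_gt0 (L_pos k kp); rewrite -kp; lra.
Qed.

Lemma bspline_shape_sorted m a : size a = m.+1 -> sorted <%R a ->
  all (fun y => 0 <= y) a -> bspline_shape m a.
Proof.
elim: m a => [|[|m] IHm] [|p a] //=.
- by case: a => // _ _ /andP[p0 _]; apply: bspline_shape0.
- by case: a => [|q [|]] //= _ /andP[pq _] /andP[p0 _]; apply: bspline_shape1.
case/lastP: a => [|s q] // [size_s] srt a_ge0; rewrite size_rcons in size_s.
have /andP[p0 /[!all_rcons] /andP[q0 s_ge0]] := a_ge0.
apply: bspline_shapeS => //; apply: IHm.
- by rewrite /= size_s.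
- by move: srt; rewrite /= rcons_path => /andP[].
- by rewrite /= p0.
- by rewrite size_rcons size_s.
- exact: path_sorted srt.
- by rewrite all_rcons q0.
Qed.

Lemma ddiff_mono_coef_pos n e : uniq e -> all (fun y => 0 <= y) e ->
  (0 < size e <= n.+1)%N ->
  (forall k, 0 <= ddiff e (mono_coef n k)) /\ exists k, 0 < ddiff e (mono_coef n k).
Proof.
move=> e_uniq e_ge0 /andP[e_gt0 e_le]; set s := sort <=%R e.
have e_s : perm_eq e s by rewrite perm_sym perm_sort.
have s_ge0 : all (fun y => 0 <= y) s by rewrite -(perm_all _ e_s).
have size_s : size s = (size e).-1.+1 by rewrite -(perm_size e_s) prednK.
have t_le : ((size e).-1 <= n)%N by rewrite -ltnS prednK.
have [spl_ge0 _ _ spl_pos] := bspline_shape_sorted size_s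
  (etrans (sort_lt_sorted e) e_uniq) s_ge0.
have E k : ddiff e (mono_coef n k)
           = iter (n - (size e).-1) psum (fun j => ddiff s (mono_coef (size e).-1 j)) k.
  rewrite iter_psum_ddiff (ddiff_perm _ e_s); apply: eq_in_ddiff => y _.
  by rewrite -mono_coefD (subnK t_le).
split=> [k|]; first by rewrite E; apply: iter_psum_ge0.
have [h hE] : exists h : nat, h%:Z = head 0 s.
  case: (s) s_ge0 => [_|x s' /andP[x0 _]]; first by exists 0%N.
  by case: x x0 => // h _; exists h.
exists h; rewrite E; apply: lt_le_trans (spl_pos h hE) _.
exact: iter_psum_ge.
Qed.

Definition node_prod (d : seq int) : rat := \prod_(z <- d | z != 0) z%:~R.

Definition hilb_pure n d k := node_prod d * ddiff d (mono_coef n k).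

Lemma node_prod_perm a b : perm_eq a b -> node_prod a = node_prod b.
Proof. by move=> ab; rewrite /node_prod (perm_big b ab). Qed.

Lemma node_prod0 C : node_prod (0 :: C) = node_prod C.
Proof. by rewrite /node_prod big_cons eqxx. Qed.

Lemma node_prod_cons w C : w != 0 -> node_prod (w :: C) = w%:~R * node_prod C.
Proof. by move=> w0; rewrite /node_prod big_cons w0. Qed.

Lemma node_prod_gt0 C : all (fun y => 0 <= y) C -> 0 < node_prod C.
Proof.
move=> C_ge0; rewrite /node_prod big_seq_cond; apply: prodr_gt0 => z /andP[zC z0].
by rewrite ltr0z lt_def z0 (allP C_ge0).
Qed.

Lemma hilb_pure_perm n a b k : perm_eq a b -> hilb_pure n a k = hilb_pure n b k.
Proof. by move=> ab; rewrite /hilb_pure (node_prod_perm ab) (ddiff_perm _ ab). Qed.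

Lemma node_prod_norm d : uniq d -> head 0 d = 0 -> (0 < size d)%N ->
  \prod_(k < size d | (0 < (k : nat))%N) ((nth 0 d k)%:~R : rat) = node_prod d.
Proof.
move=> d_uniq d0 d_gt0; have nth_d0 : nth 0 d 0 = 0 by rewrite nth0.
rewrite /node_prod (big_nth 0) big_mkord; apply: eq_bigl => i.
by rewrite -{2}nth_d0 nth_uniq //; case: (nat_of_ord i).
Qed.

Lemma ddiff_coef_nth d (i : 'I_(size d)) : uniq d ->
  ddiff_coef d (nth 0 d i)
  = \prod_(k < size d | (k : nat) != i) ((nth 0 d k - nth 0 d i)%:~R : rat)^-1.
Proof.
move=> d_uniq; rewrite /ddiff_coef (big_nth 0) big_mkord.
by apply: eq_bigl => k; rewrite nth_uniq.
Qed.

Lemma hilb_num_norm_pure n d j : uniq d -> head 0 d = 0 ->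
  (0 < size d <= n.+1)%N ->
  hilb_num n (norm_pure_diagram d) j = node_prod d * ddiff d (fun y => (j%:Z == y)%:R).
Proof.
move=> d_uniq d0 /andP[d_gt0 d_le]; rewrite /hilb_num /norm_pure_diagram node_prod_norm //.
under eq_bigr => i _ do rewrite mulrCA.
rewrite -mulr_sumr -(big_mkord xpredT (fun i => (-1) ^+ i * pure_diagram d i j)).
rewrite (big_cat_nat _ (n := size d)) //=.
have -> : \sum_(size d <= i < n.+1) (-1) ^+ i * pure_diagram d i j = 0.
  by rewrite big_nat big1 // => i /andP[i_ge _]; rewrite /pure_diagram ltnNge i_ge mulr0.
rewrite addr0 /ddiff; congr (_ * _); rewrite [RHS](big_nth 0) !big_mkord.
apply: eq_bigr => i _.
rewrite /pure_diagram ltn_ord ddiff_coef_nth //=.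
case: eqP => _; rewrite ?mulr0 // mulr1 mulrA -exprD addnn -mul2n exprM sqrrN.
by rewrite !expr1n mul1r.
Qed.

Lemma hilb_coef_norm_pure n d k : uniq d -> head 0 d = 0 ->
  (0 < size d <= n.+1)%N ->
  hilb_coef n (norm_pure_diagram d) k = hilb_pure n d k.
Proof.
move=> d_uniq d0 d_size; rewrite /hilb_coef.
rewrite (eq_iter_psum _ (g := fun j => ddiff d (fun y => node_prod d * (j%:Z == y)%:R))).
  rewrite iter_psum_ddiff /hilb_pure -ddiffZ.
  by apply: eq_in_ddiff => y _; rewrite iter_psumZ.
by move=> j; rewrite hilb_num_norm_pure // ddiffZ.
Qed.

Lemma node_prod_ddiff_drop w C f : 0 \notin C -> w \notin C -> w != 0 ->
  node_prod (0 :: C) * ddiff (0 :: C) f - node_prod [:: 0, w & C] * ddiff [:: 0, w & C] f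
  = node_prod C * ddiff (w :: C) f.
Proof.
move=> C0 wC w0; rewrite !node_prod0 node_prod_cons // ddiff_cons2 ?subr0 1?eq_sym //.
have : (w%:~R : rat) != 0 by rewrite intr_eq0.
by move: (w%:~R) (node_prod C) (ddiff (0 :: C) f) (ddiff (w :: C) f) => W P X Y W0; field.
Qed.

Lemma node_prod_ddiff_shift v w C f :
  0 \notin C -> v \notin C -> w \notin C -> v != 0 -> w != 0 -> v != w ->
  node_prod [:: 0, w & C] * ddiff [:: 0, w & C] f
  - node_prod [:: 0, v & C] * ddiff [:: 0, v & C] f
  = (w - v)%:~R * node_prod C * ddiff [:: v, w & C] f.
Proof.
move=> C0 vC wC v0 w0 vw.
move: (node_prod_ddiff_drop f C0 wC w0) (node_prod_ddiff_drop f C0 vC v0).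
move: (node_prod (0 :: C) * _) (node_prod [:: 0, w & C] * _) => F0 Fw.
move: (node_prod [:: 0, v & C] * _) => Fv Ew Ev.
rewrite (_ : Fw - Fv = (F0 - Fv) - (F0 - Fw)); last by ring.
rewrite Ew Ev ddiff_cons2 //.
have : ((w - v)%:~R : rat) != 0 by rewrite intr_eq0 subr_eq0 eq_sym.
by move: (_%:~R) (node_prod C) (ddiff (v :: C) f) (ddiff (w :: C) f) => W P X Y W0; field.
Qed.

Definition hilb_le n d d' := forall k, hilb_pure n d k <= hilb_pure n d' k.

Definition hilb_lt n d d' :=
  hilb_le n d d' /\ exists k, hilb_pure n d k < hilb_pure n d' k.

Lemma hilb_le_trans n d1 d2 d3 : hilb_le n d1 d2 -> hilb_le n d2 d3 -> hilb_le n d1 d3.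
Proof. by move=> le12 le23 k; apply: le_trans (le12 k) (le23 k). Qed.

Lemma hilb_lt_le_trans n d1 d2 d3 :
  hilb_lt n d1 d2 -> hilb_le n d2 d3 -> hilb_lt n d1 d3.
Proof.
move=> [le12 [k lt12]] le23; split; first exact: hilb_le_trans le23.
by exists k; apply: lt_le_trans lt12 (le23 k).
Qed.

Lemma hilb_le_lt_trans n d1 d2 d3 :
  hilb_le n d1 d2 -> hilb_lt n d2 d3 -> hilb_lt n d1 d3.
Proof.
move=> le12 [le23 [k lt23]]; split; first exact: hilb_le_trans le23.
by exists k; apply: le_lt_trans (le12 k) lt23.
Qed.

Lemma hilb_lt_of_ddiff n d d' c e :
  (forall k, hilb_pure n d' k - hilb_pure n d k = c * ddiff e (mono_coef n k)) ->
  0 < c -> uniq e -> all (fun y => 0 <= y) e -> (0 < size e <= n.+1)%N ->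
  hilb_lt n d d'.
Proof.
move=> E c_gt0 e_uniq e_ge0 e_size.
have [dd_ge0 [k dd_gt0]] := ddiff_mono_coef_pos e_uniq e_ge0 e_size.
split=> [k'|]; first by rewrite -subr_ge0 E mulr_ge0 // ltW.
by exists k; rewrite -subr_gt0 E mulr_gt0.
Qed.

Lemma hilb_lt_drop n p s w :
  uniq (0 :: p ++ w :: s) -> all (fun y => 0 <= y) (p ++ w :: s) ->
  (size (p ++ s) <= n)%N -> hilb_lt n (0 :: p ++ w :: s) (0 :: p ++ s).
Proof.
set C := p ++ s => d_uniq d_ge0 C_size.
have perm_w : perm_eq (p ++ w :: s) (w :: C) by exact: permEl (perm_catCA p [:: w] s).
have perm_d : perm_eq (0 :: p ++ w :: s) [:: 0, w & C] by rewrite perm_cons.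
move: d_uniq d_ge0; rewrite (perm_uniq perm_d) (perm_all _ perm_w) /= inE negb_or.
case/and3P=> /andP[w0 C0] wC C_uniq e_ge0.
apply: (@hilb_lt_of_ddiff _ _ _ (node_prod C) (w :: C)) => //=.
- move=> k; rewrite (hilb_pure_perm _ _ perm_d).
  by apply: node_prod_ddiff_drop; rewrite // eq_sym.
- by apply: node_prod_gt0; case/andP: e_ge0.
- by rewrite wC.
Qed.

Lemma hilb_lt_raise n p s x x' : x < x' ->
  uniq (0 :: p ++ x :: s) -> uniq (0 :: p ++ x' :: s) ->
  all (fun y => 0 <= y) (p ++ x :: s) -> (size (p ++ s) < n)%N ->
  hilb_lt n (0 :: p ++ x :: s) (0 :: p ++ x' :: s).
Proof.
set C := p ++ s => xx' d_uniq d'_uniq d_ge0 C_size.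
have perm_z z : perm_eq (p ++ z :: s) (z :: C) by exact: permEl (perm_catCA p [:: z] s).
have perm_d z : perm_eq (0 :: p ++ z :: s) [:: 0, z & C] by rewrite perm_cons.
move: d_uniq d'_uniq d_ge0; rewrite !(perm_uniq (perm_d _)) (perm_all _ (perm_z x)) /=.
rewrite !inE !negb_or => /and3P[/andP[x0 C0] xC C_uniq] /and3P[/andP[x'0 _] x'C _].
case/andP=> x_ge0 C_ge0; rewrite eq_sym in x0; rewrite eq_sym in x'0.
have x'_ge0 : 0 <= x' by rewrite (le_trans x_ge0) ?ltW.
apply: (@hilb_lt_of_ddiff _ _ _ ((x' - x)%:~R * node_prod C) [:: x, x' & C]) => /=.
- move=> k; rewrite !(hilb_pure_perm _ _ (perm_d _)).
  by apply: node_prod_ddiff_shift; rewrite // lt_eqF.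
- by rewrite mulr_gt0 ?node_prod_gt0 // ltr0z subr_gt0.
- by rewrite inE negb_or lt_eqF // xC x'C.
- by rewrite x_ge0 x'_ge0.
- by rewrite !ltnS.
Qed.

Lemma hilb_lt_drop_suffix n a r : r != [::] ->
  uniq (0 :: a ++ r) -> all (fun y => 0 <= y) (a ++ r) -> (size (a ++ r) <= n)%N ->
  hilb_lt n (0 :: a ++ r) (0 :: a).
Proof.
elim: r => // w r IHr _ d_uniq d_ge0 d_size.
have sub_d : subseq (0 :: a ++ r) (0 :: a ++ w :: r).
  by rewrite /= ?eqxx; exact: cat_subseq (subseq_refl a) (subseq_cons r w).
have r_size : (size (a ++ r) <= n)%N.
  by apply: leq_trans d_size; rewrite !size_cat /= addnS.
have drop_w := hilb_lt_drop d_uniq d_ge0 r_size.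
have [r0|r_nil] := eqVneq r [::]; first by move: drop_w; rewrite r0 cats0.
apply: hilb_lt_le_trans drop_w (IHr r_nil _ _ r_size).1.
  exact: subseq_uniq sub_d d_uniq.
by move: d_ge0; rewrite !all_cat /= => /and3P[-> _ ->].
Qed.

Lemma lt_sorted_cat_cons_mix (q b b' : seq int) x x' : x <= x' ->
  sorted <%R (q ++ x :: b) -> sorted <%R (q ++ x' :: b') -> sorted <%R (q ++ x :: b').
Proof.
move=> xx'; rewrite !lt_sorted_pairwise !pairwise_cat !allrel_consr !pairwise_cons.
case/and3P=> /andP[qx _] q_pw _ /and3P[/andP[_ qb'] _ /andP[x'b' b'_pw]].
rewrite qx qb' q_pw b'_pw !andbT /=.
by apply/allP=> z /(allP x'b'); apply: le_lt_trans.
Qed.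

Lemma lt_sorted0_ge0 (l : seq int) : sorted <%R (0 :: l) -> all (fun y => 0 <= y) l.
Proof.
rewrite lt_sorted_pairwise /= => /andP[l_gt0 _].
by apply/allP=> y /(allP l_gt0) /ltW.
Qed.

Lemma hilb_le_raise_sorted n p a a' : all2 <=%R a a' ->
  sorted <%R (0 :: p ++ a) -> sorted <%R (0 :: p ++ a') -> (size (p ++ a) <= n)%N ->
  hilb_le n (0 :: p ++ a) (0 :: p ++ a')
  /\ (a != a' -> hilb_lt n (0 :: p ++ a) (0 :: p ++ a')).
Proof.
elim: a a' p => [|x b IHb] [|x' b'] p //=; first by split=> // k.
case/andP=> xx' bb' srt srt' d_size.
have srt_mid : sorted <%R (0 :: p ++ x :: b').
  exact: (@lt_sorted_cat_cons_mix (0 :: p) b b' x x' xx' srt srt').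
have size_b : size b = size b' by move: bb'; rewrite all2E => /andP[/eqP].
have [le_b lt_b] : hilb_le n (0 :: p ++ x :: b) (0 :: p ++ x :: b')
    /\ (b != b' -> hilb_lt n (0 :: p ++ x :: b) (0 :: p ++ x :: b')).
  by rewrite -!cat_rcons; apply: IHb; rewrite ?cat_rcons.
move: xx'; rewrite le_eqVlt => /orP[/eqP <- | lt_x].
  by split=> //; rewrite eqseq_cons eqxx.
have raise_x : hilb_lt n (0 :: p ++ x :: b') (0 :: p ++ x' :: b').
  apply: hilb_lt_raise; rewrite ?lt_sorted_uniq ?lt_sorted0_ge0 //.
  by move: d_size; rewrite !size_cat /= -size_b addnS.
have lt_d := hilb_le_lt_trans le_b raise_x.
by split=> [|_]; [exact: lt_d.1 | exact: lt_d].
Qed.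

Lemma pd_le_all2 d d' : pd_le d d' -> all2 <=%R (take (size d') d) d'.
Proof.
case/andP=> size_le /forallP le_nth.
rewrite all2E size_takel // eqxx /=; apply/(all_nthP (0, 0)) => i.
rewrite size_zip size_takel // minnn => lt_i.
by rewrite nth_zip ?size_takel // nth_take //=; apply: (le_nth (Ordinal lt_i)).
Qed.

Lemma hilb_lt_pd_lt n d d' : valid_degrees n d -> valid_degrees n d' ->
  head 0 d = 0 -> head 0 d' = 0 -> pd_lt d d' -> hilb_lt n d d'.
Proof.
case: d d' => [|z D] [|z' D'] //= /and3P[_ D_size srt] /and3P[_ _ srt'] z0 z'0.
subst z z' => /andP[/pd_le_all2 /= le_D]; rewrite eqseq_cons eqxx /= => D_neq.
set D1 := take (size D') D in le_D; set r := drop (size D') D.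
have eD : D = D1 ++ r by rewrite cat_take_drop.
have srt1 : sorted <%R (0 :: D1) by apply: (take_sorted (size D').+1 srt).
have D_uniq : uniq (0 :: D1 ++ r) by rewrite -eD lt_sorted_uniq.
have D_ge0 : all (fun y => 0 <= y) (D1 ++ r) by rewrite -eD lt_sorted0_ge0.
have {}D_size : (size (D1 ++ r) <= n)%N by rewrite -eD.
have D1_size : (size D1 <= n)%N by rewrite (leq_trans _ D_size) // size_cat leq_addr.
have [le_raise lt_raise] := hilb_le_raise_sorted (p := [::]) le_D srt1 srt' D1_size.
have [r0|r_nil] := eqVneq r [::].
  by rewrite eD r0 cats0 in D_neq *; apply: lt_raise.
rewrite eD; apply: hilb_lt_le_trans le_raise.
exact: hilb_lt_drop_suffix r_nil D_uniq D_ge0 D_size.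
Qed.

Theorem proposition4p4 (n : nat) (d d' : seq int) :
  (1 <= n)%N ->
  valid_degrees n d -> valid_degrees n d' ->
  head 0 d = 0 -> head 0 d' = 0 ->
  pd_lt d d' ->
  (forall k : nat,
     0 <= hilb_coef n (norm_pure_diagram d') k - hilb_coef n (norm_pure_diagram d) k)
  /\ (exists k : nat,
     hilb_coef n (norm_pure_diagram d') k - hilb_coef n (norm_pure_diagram d) k != 0).
Proof.
move=> _ d_valid d'_valid d0 d'0 dd'.
have [le_dd' [k lt_k]] := hilb_lt_pd_lt d_valid d'_valid d0 d'0 dd'.
have hilb_coefE e : valid_degrees n e -> head 0 e = 0 ->
    hilb_coef n (norm_pure_diagram e) =1 hilb_pure n e.
  case/and3P=> e_gt0 e_le e_srt e0 j.
  by rewrite hilb_coef_norm_pure ?e_gt0 ?lt_sorted_uniq.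
split=> [j|]; first by rewrite !hilb_coefE // subr_ge0.
by exists k; rewrite !hilb_coefE // subr_eq0 gt_eqF.
Qed.
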